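(* Let $a_{12},a_{13},a_{23}\in C^\infty(\mathbb{R}^3)$ be nowhere-vanishing and suppose that $$\partial_1\!\left(\frac{a_{12}}{a_{13}}\right)=\partial_2\!\left(\frac{a_{12}}{a_{23}}\right)=\partial_3\!\left(\frac{a_{13}}{a_{23}}\right)=0 .$$ Then $F_1=a_{12}\,\partial_1\smile\partial_2+a_{13}\,\partial_1\smile\partial_3+a_{23}\,\partial_2\smile\partial_3$ is quasibasic: there exist smooth functions $f_1,f_2,f_3$, with $f_i$ depending only on $x_i$, and a smooth function $\varphi$ on $\mathbb{R}^3$ such that $a_{12}=\varphi f_1f_2$, $a_{13}=\varphi f_1f_3$, $a_{23}=\varphi f_2f_3$.
   Context: $\partial_i=\partial/\partial x_i$ on $C^\infty(\mathbb{R}^3)$ and $(f\smile g)(a,b)=f(a)g(b)$. An infinitesimal deformation of $C^\infty(\mathbb{R}^3)$ is called quasibasic if it equals $\varphi$ times a basic one, where a basic infinitesimal has the form $\sum_{i<j}c_{ij}f_i\partial_i\smile f_j\partial_j$ with real constants $c_{ij}$ and each $f_i$ a smooth function of $x_i$ alone. *)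

From Stdlib Require Import Reals List.
From Coquelicot Require Import Coquelicot.
Open Scope R_scope.

Definition R3 : Type := (R * R * R)%type.

(* Coordinate i of a point (0-based: 0 <-> x_1, 1 <-> x_2, otherwise x_3). *)
Definition coord (i : nat) (x : R3) : R :=
  match i with
  | O => fst (fst x)
  | S O => snd (fst x)
  | _ => snd x
  end.

Definition upd (i : nat) (x : R3) (t : R) : R3 :=
  match i with
  | O => (t, snd (fst x), snd x)
  | S O => (fst (fst x), t, snd x)
  | _ => (fst (fst x), snd (fst x), t)
  end.

Definition pd (i : nat) (f : R3 -> R) : R3 -> R :=
  fun x => Derive (fun t => f (upd i x t)) (coord i x).

Fixpoint iter_pd (l : list nat) (f : R3 -> R) : R3 -> R :=
  match l with
  | nil => f
  | i :: l' => pd i (iter_pd l' f)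
  end.

Definition smooth3 (f : R3 -> R) : Prop :=
  forall l : list nat,
    (forall x : R3, continuous (iter_pd l f) x) /\
    (forall (i : nat) (x : R3),
        ex_derive (fun t => iter_pd l f (upd i x t)) (coord i x)).

Definition smooth1 (g : R -> R) : Prop :=
  forall (n : nat) (t : R), ex_derive (Derive_n g n) t.

From Stdlib Require Import Reals List Lia Lra FunctionalExtensionality.
From Coquelicot Require Import Coquelicot.
Open Scope R_scope.

(* Put r = a12/a13, s = a12/a23 and t = a13/a23, so that s = r t.
   The hypotheses say that r, s, t have vanishing partial derivative in x1, x2,
   x3 respectively, hence (mean value theorem) do not depend on that variable.
   Evaluating s = r t at suitable points then separates the variables:
     r(u,v,w) = s(0,0,w) / t(0,v,0),   s(u,v,w) = t(u,0,0) s(0,0,w) / t(0,0,0),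
   which is exactly what is needed for
     f1(u) = t(u,0,0),  f2(v) = t(0,0,0)/t(0,v,0),  f3(w) = t(0,0,0)/s(0,0,w),
     phi = a12 / (f1(x1) f2(x2)). *)

Lemma upd_coord i x : upd i x (coord i x) = x.
Proof. destruct x as [[a b] c]; destruct i as [|[|i]]; reflexivity. Qed.

Lemma coord_upd i x t : coord i (upd i x t) = t.
Proof. destruct x as [[a b] c]; destruct i as [|[|i]]; reflexivity. Qed.

Lemma upd_upd i x s t : upd i (upd i x s) t = upd i x t.
Proof. destruct x as [[a b] c]; destruct i as [|[|i]]; reflexivity. Qed.

Lemma upd_axis i j :
  (upd j = upd i /\ coord j = coord i) \/
  (forall x t, coord i (upd j x t) = coord i x).
Proof.
  destruct i as [|[|i]]; destruct j as [|[|j]];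
    try (left; split; reflexivity); right; intros [[a b] c] t; reflexivity.
Qed.

Lemma continuous_coord i x : continuous (coord i) x.
Proof.
  destruct x as [[a b] c]; destruct i as [|[|i]]; simpl.
  - apply (continuous_comp (U := prod_UniformSpace
             (prod_UniformSpace R_UniformSpace R_UniformSpace) R_UniformSpace) fst fst);
      [apply continuous_fst | apply continuous_fst].
  - apply (continuous_comp (U := prod_UniformSpace
             (prod_UniformSpace R_UniformSpace R_UniformSpace) R_UniformSpace) fst snd);
      [apply continuous_fst | apply continuous_snd].
  - apply continuous_snd.
Qed.

Definition diff3 (f : R3 -> R) : Prop :=
  (forall x, continuous f x) /\
  (forall i x, ex_derive (fun t => f (upd i x t)) (coord i x)).

Lemma ex_derive_line (f : R3 -> R) i :
  (forall x, ex_derive (fun t => f (upd i x t)) (coord i x)) ->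
  forall x s, ex_derive (fun t => f (upd i x t)) s.
Proof.
  intros Hf x s. specialize (Hf (upd i x s)). rewrite coord_upd in Hf.
  eapply ex_derive_ext; [|exact Hf]. intros t; simpl. now rewrite upd_upd.
Qed.

Lemma diff3_const c : diff3 (fun _ => c).
Proof. split; intros; [apply continuous_const | apply ex_derive_const]. Qed.

Lemma diff3_plus f g : diff3 f -> diff3 g -> diff3 (fun x => f x + g x).
Proof.
  intros [Cf Df] [Cg Dg]; split.
  - intros x. apply (continuous_plus f g); auto.
  - intros i x. apply (ex_derive_plus (fun t => f (upd i x t)) (fun t => g (upd i x t))); auto.
Qed.

Lemma diff3_mult f g : diff3 f -> diff3 g -> diff3 (fun x => f x * g x).
Proof.
  intros [Cf Df] [Cg Dg]; split.
  - intros x. apply (continuous_mult f g); auto.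
  - intros i x. apply (ex_derive_mult (fun t => f (upd i x t)) (fun t => g (upd i x t))); auto.
Qed.

Lemma diff3_inv f : (forall x, f x <> 0) -> diff3 f -> diff3 (fun x => / f x).
Proof.
  intros Nf [Cf Df]; split.
  - intros x. apply (continuous_comp f (fun y => / y)); auto.
    apply (ex_derive_continuous (K := R_AbsRing) (V := R_NormedModule) (fun y => / y)).
    apply (ex_derive_inv (fun y => y)); [apply ex_derive_id | auto].
  - intros i x. apply (ex_derive_inv (fun t => f (upd i x t))); [apply Df|].
    simpl; rewrite upd_coord; auto.
Qed.

Lemma pd_const i c : pd i (fun _ => c) = fun _ => 0.
Proof. apply functional_extensionality; intros x; unfold pd; apply Derive_const. Qed.

Lemma pd_plus i f g : diff3 f -> diff3 g ->
  pd i (fun x => f x + g x) = fun x => pd i f x + pd i g x.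
Proof.
  intros [_ Df] [_ Dg]. apply functional_extensionality; intros x; unfold pd.
  apply Derive_plus; auto.
Qed.

Lemma pd_mult i f g : diff3 f -> diff3 g ->
  pd i (fun x => f x * g x) = fun x => pd i f x * g x + f x * pd i g x.
Proof.
  intros [_ Df] [_ Dg]. apply functional_extensionality; intros x; unfold pd.
  rewrite (Derive_mult (fun t => f (upd i x t)) (fun t => g (upd i x t))); auto.
  now rewrite upd_coord.
Qed.

Lemma pd_inv i f : (forall x, f x <> 0) -> diff3 f ->
  pd i (fun x => / f x) = fun x => (-1 * pd i f x) * (/ f x * / f x).
Proof.
  intros Nf [_ Df]. apply functional_extensionality; intros x; unfold pd.
  rewrite (Derive_inv (fun t => f (upd i x t))); auto; rewrite upd_coord; auto.
  field; auto.
Qed.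

Definition smooth_upto (n : nat) (f : R3 -> R) : Prop :=
  forall l, (length l <= n)%nat -> diff3 (iter_pd l f).

Lemma smooth3_upto f : smooth3 f <-> forall n, smooth_upto n f.
Proof.
  split.
  - intros H n l _. apply H.
  - intros H l. apply (H (length l) l). lia.
Qed.

Lemma iter_pd_last l i f : iter_pd (l ++ i :: nil) f = iter_pd l (pd i f).
Proof. induction l as [|j l IH]; simpl; [reflexivity | now rewrite IH]. Qed.

Lemma smooth_upto_diff3 n f : smooth_upto n f -> diff3 f.
Proof. intros H. apply (H nil). simpl; lia. Qed.

Lemma smooth_upto_pd n i f : smooth_upto (S n) f -> smooth_upto n (pd i f).
Proof.
  intros H l Hl. rewrite <- iter_pd_last. apply H.
  rewrite length_app; simpl. lia.
Qed.

Lemma smooth_upto_S n f :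
  diff3 f -> (forall i, smooth_upto n (pd i f)) -> smooth_upto (S n) f.
Proof.
  intros H0 HS l Hl. destruct l as [|j l']; [exact H0|].
  destruct (exists_last (l := j :: l')) as [l0 [i E]]; [discriminate|].
  rewrite E in Hl |- *. rewrite length_app in Hl; simpl in Hl.
  rewrite iter_pd_last. apply HS. lia.
Qed.

Lemma smooth_upto_const n : forall c, smooth_upto n (fun _ => c).
Proof.
  induction n as [|n IH]; intros c.
  - intros [|i l] Hl; [apply diff3_const | simpl in Hl; lia].
  - apply smooth_upto_S; [apply diff3_const|]. intros i; rewrite pd_const; apply IH.
Qed.

Lemma smooth_upto_plus n : forall f g,
  smooth_upto n f -> smooth_upto n g -> smooth_upto n (fun x => f x + g x).
Proof.
  induction n as [|n IH]; intros f g Hf Hg.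
  - intros [|i l] Hl; [|simpl in Hl; lia].
    apply diff3_plus; eapply smooth_upto_diff3; eauto.
  - apply smooth_upto_S.
    + apply diff3_plus; eapply smooth_upto_diff3; eauto.
    + intros i. rewrite pd_plus by (eapply smooth_upto_diff3; eauto).
      apply IH; apply smooth_upto_pd; auto.
Qed.

Lemma smooth_upto_le n f : smooth_upto (S n) f -> smooth_upto n f.
Proof. intros H l Hl. apply H. lia. Qed.

Lemma smooth_upto_mult n : forall f g,
  smooth_upto n f -> smooth_upto n g -> smooth_upto n (fun x => f x * g x).
Proof.
  induction n as [|n IH]; intros f g Hf Hg.
  - intros [|i l] Hl; [|simpl in Hl; lia].
    apply diff3_mult; eapply smooth_upto_diff3; eauto.
  - apply smooth_upto_S.
    + apply diff3_mult; eapply smooth_upto_diff3; eauto.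
    + intros i. rewrite pd_mult by (eapply smooth_upto_diff3; eauto).
      apply smooth_upto_plus; apply IH;
        auto using smooth_upto_pd, smooth_upto_le.
Qed.

Lemma smooth_upto_inv n : forall f, (forall x, f x <> 0) ->
  smooth_upto n f -> smooth_upto n (fun x => / f x).
Proof.
  induction n as [|n IH]; intros f Nf Hf.
  - intros [|i l] Hl; [|simpl in Hl; lia].
    apply diff3_inv; [auto | eapply smooth_upto_diff3; eauto].
  - apply smooth_upto_S.
    + apply diff3_inv; [auto | eapply smooth_upto_diff3; eauto].
    + intros i. rewrite pd_inv by (auto; eapply smooth_upto_diff3; eauto).
      apply smooth_upto_mult.
      * apply smooth_upto_mult; [apply smooth_upto_const | apply smooth_upto_pd; auto].
      * apply smooth_upto_mult; apply IH; auto using smooth_upto_le.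
Qed.

Lemma smooth3_const c : smooth3 (fun _ => c).
Proof. apply smooth3_upto; intros; apply smooth_upto_const. Qed.

Lemma smooth3_mult f g : smooth3 f -> smooth3 g -> smooth3 (fun x => f x * g x).
Proof. rewrite !smooth3_upto; intros; apply smooth_upto_mult; auto. Qed.

Lemma smooth3_inv f : (forall x, f x <> 0) -> smooth3 f -> smooth3 (fun x => / f x).
Proof. rewrite !smooth3_upto; intros; apply smooth_upto_inv; auto. Qed.

Lemma smooth3_div f g : (forall x, g x <> 0) -> smooth3 f -> smooth3 g ->
  smooth3 (fun x => f x / g x).
Proof. intros; apply smooth3_mult; [|apply smooth3_inv]; auto. Qed.

Lemma Derive_n_restrict (F : R3 -> R) i p n t :
  Derive_n (fun t => F (upd i p t)) n t = iter_pd (repeat i n) F (upd i p t).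
Proof.
  revert t; induction n as [|n IH]; intros t; simpl; [reflexivity|].
  rewrite (Derive_ext _ (fun s => iter_pd (repeat i n) F (upd i p s))) by apply IH.
  unfold pd. rewrite coord_upd. apply Derive_ext. intros s; now rewrite upd_upd.
Qed.

Lemma smooth1_restrict F i p : smooth3 F -> smooth1 (fun t => F (upd i p t)).
Proof.
  intros HF n t. eapply ex_derive_ext.
  { intros s. symmetry. apply Derive_n_restrict. }
  apply ex_derive_line. intros x. apply HF.
Qed.

Lemma iter_pd_lift (g : R -> R) i l :
  (exists k, iter_pd l (fun x => g (coord i x)) = fun x => Derive_n g k (coord i x)) \/
  iter_pd l (fun x => g (coord i x)) = fun _ => 0.
Proof.
  induction l as [|j l [[k IH] | IH]]; simpl.
  - left; exists 0%nat; reflexivity.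
  - rewrite IH. destruct (upd_axis i j) as [[E1 E2] | E].
    + left; exists (S k). apply functional_extensionality; intros x; unfold pd.
      rewrite E1, E2. simpl. apply Derive_ext. intros t; now rewrite coord_upd.
    + right. apply functional_extensionality; intros x; unfold pd.
      rewrite (Derive_ext _ (fun _ => Derive_n g k (coord i x))); [apply Derive_const|].
      intros t; now rewrite E.
  - rewrite IH. right. now rewrite pd_const.
Qed.

Lemma smooth3_lift g i : smooth1 g -> smooth3 (fun x => g (coord i x)).
Proof.
  intros Hg l. destruct (iter_pd_lift g i l) as [[k ->] | ->]; [|apply diff3_const].
  split.
  - intros x. apply (continuous_comp (coord i) (Derive_n g k)); [apply continuous_coord|].
    apply (ex_derive_continuous (K := R_AbsRing) (V := R_NormedModule)). apply Hg.
  - intros j x. destruct (upd_axis i j) as [[E1 E2] | E].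
    + rewrite E1, E2. eapply ex_derive_ext; [|apply (Hg k)].
      intros t; simpl; now rewrite coord_upd.
    + eapply ex_derive_ext; [|apply (ex_derive_const (Derive_n g k (coord i x)))].
      intros t; simpl; now rewrite E.
Qed.

(* A function whose i-th partial derivative vanishes everywhere is invariant
   under changes of the i-th coordinate (mean value theorem on each line). *)
Lemma pd_zero_invariant F i :
  (forall x, ex_derive (fun t => F (upd i x t)) (coord i x)) ->
  (forall x, pd i F x = 0) -> forall x t, F (upd i x t) = F x.
Proof.
  intros DF H0 x t.
  assert (D : forall s, is_derive (fun t => F (upd i x t)) s 0).
  { intros s.
    assert (E : ex_derive (fun t => F (upd i x t)) s) by (apply ex_derive_line; apply DF).
    replace 0 with (Derive (fun t => F (upd i x t)) s); [now apply Derive_correct|].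
    rewrite <- (H0 (upd i x s)). unfold pd. rewrite coord_upd. apply Derive_ext.
    intros u; now rewrite upd_upd. }
  destruct (MVT_gen (fun t => F (upd i x t)) (coord i x) t (fun _ => 0)) as [c [_ Hc]].
  - intros; apply D.
  - intros y _. apply continuity_pt_filterlim.
    apply (ex_derive_continuous (K := R_AbsRing) (V := R_NormedModule)). eexists; apply D.
  - rewrite upd_coord in Hc. lra.
Qed.

Lemma smooth3_pd_zero_invariant F i :
  smooth3 F -> (forall x, pd i F x = 0) -> forall x t, F (upd i x t) = F x.
Proof. intros HF; apply pd_zero_invariant, (proj2 (HF nil)). Qed.

Lemma Rdiv_neq_0 a b : a <> 0 -> b <> 0 -> a / b <> 0.
Proof.
  intros Ha Hb. apply Rmult_integral_contrapositive_currified; auto using Rinv_neq_0_compat.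
Qed.

Definition origin : R3 := (0, 0, 0).

Lemma ratio_separation (r s t : R3 -> R) :
  (forall x, s x = r x * t x) -> (forall x, t x <> 0) ->
  (forall x c, r (upd 0 x c) = r x) ->
  (forall x c, s (upd 1 x c) = s x) ->
  (forall x c, t (upd 2 x c) = t x) ->
  forall x,
    s (upd 2 origin (coord 2 x)) = r x * t (upd 1 origin (coord 1 x)) /\
    s (upd 2 origin (coord 2 x)) = s x * t origin / t (upd 0 origin (coord 0 x)).
Proof.
  intros Hsrt Nt Hr Hs Ht [[u v] w]; unfold origin; cbn [upd coord fst snd].
  assert (Ht0 : t (0, 0, w) = t (0, 0, 0)) by (symmetry; exact (Ht (0, 0, w) 0)).
  assert (Htv : t (0, v, w) = t (0, v, 0)) by (symmetry; exact (Ht (0, v, w) 0)).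
  assert (Htu : t (u, 0, w) = t (u, 0, 0)) by (symmetry; exact (Ht (u, 0, w) 0)).
  assert (Hsv : s (0, v, w) = s (0, 0, w)) by (symmetry; exact (Hs (0, v, w) 0)).
  assert (Hsu : s (u, v, w) = s (u, 0, w)) by (symmetry; exact (Hs (u, v, w) 0)).
  assert (Hru : r (u, v, w) = r (0, v, w)) by (symmetry; exact (Hr (u, v, w) 0)).
  assert (Hr0 : r (u, 0, w) = r (0, 0, w)) by (symmetry; exact (Hr (u, 0, w) 0)).
  split.
  - rewrite <- Hsv, Hsrt, Hru, Htv. reflexivity.
  - apply (Rmult_eq_reg_r (t (u, 0, 0))); [|apply Nt].
    unfold Rdiv; rewrite Rmult_assoc, Rinv_l, Rmult_1_r by apply Nt.
    rewrite Hsu, !Hsrt, Hr0, <- Ht0, <- Htu. ring.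
Qed.

Theorem theorem8 (a12 a13 a23 : R3 -> R) :
  smooth3 a12 -> smooth3 a13 -> smooth3 a23 ->
  (forall x, a12 x <> 0) -> (forall x, a13 x <> 0) -> (forall x, a23 x <> 0) ->
  (forall x, pd 0 (fun y => a12 y / a13 y) x = 0) ->
  (forall x, pd 1 (fun y => a12 y / a23 y) x = 0) ->
  (forall x, pd 2 (fun y => a13 y / a23 y) x = 0) ->
  exists (f1 f2 f3 : R -> R) (phi : R3 -> R),
    smooth1 f1 /\ smooth1 f2 /\ smooth1 f3 /\ smooth3 phi /\
    forall x : R3,
      a12 x = phi x * f1 (coord 0 x) * f2 (coord 1 x) /\
      a13 x = phi x * f1 (coord 0 x) * f3 (coord 2 x) /\
      a23 x = phi x * f2 (coord 1 x) * f3 (coord 2 x).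
Proof.
  intros S12 S13 S23 N12 N13 N23 H1 H2 H3.
  set (r := fun y => a12 y / a13 y); set (s := fun y => a12 y / a23 y);
    set (t := fun y => a13 y / a23 y).
  assert (Sr : smooth3 r) by (apply smooth3_div; auto).
  assert (Ss : smooth3 s) by (apply smooth3_div; auto).
  assert (St : smooth3 t) by (apply smooth3_div; auto).
  assert (Ns : forall x, s x <> 0) by (intros x; apply Rdiv_neq_0; auto).
  assert (Nt : forall x, t x <> 0) by (intros x; apply Rdiv_neq_0; auto).
  assert (Esrt : forall x, s x = r x * t x) by (intros x; unfold r, s, t; field; auto).
  pose proof (ratio_separation r s t Esrt Nt (smooth3_pd_zero_invariant r 0 Sr H1)
    (smooth3_pd_zero_invariant s 1 Ss H2) (smooth3_pd_zero_invariant t 2 St H3)) as Sep.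
  set (f1 := fun u => t (upd 0 origin u)).
  set (f2 := fun v => t origin / t (upd 1 origin v)).
  set (f3 := fun w => t origin / s (upd 2 origin w)).
  assert (Sf1 : smooth1 f1) by (apply smooth1_restrict; exact St).
  assert (Sf2 : smooth1 f2) by (apply (smooth1_restrict (fun y => t origin / t y));
    apply smooth3_div; auto using smooth3_const).
  assert (Sf3 : smooth1 f3) by (apply (smooth1_restrict (fun y => t origin / s y));
    apply smooth3_div; auto using smooth3_const).
  exists f1, f2, f3, (fun x => a12 x / (f1 (coord 0 x) * f2 (coord 1 x))).
  split; [exact Sf1|]; split; [exact Sf2|]; split; [exact Sf3|]; split.
  - apply smooth3_div; [|auto|apply smooth3_mult; apply smooth3_lift; assumption].
    intros x; apply Rmult_integral_contrapositive_currified; [apply Nt|apply Rdiv_neq_0; apply Nt].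
  - intros x; destruct (Sep x) as [E13 E23]; unfold f1, f2, f3; cbv beta.
    split; [|split]; [| rewrite E13 | rewrite E23];
      unfold r, s, t; field; repeat split; auto.
Qed.
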